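(* Let $p\ge0$. There is a constant $C_p<\infty$ such that for all $0\le a<b$ and all $u\in H^1(a,b)$ with $u(b)=0$, $$\int_a^b\Big(\frac{u(x)}{b-x}\Big)^2x^p\,dx\le C_p\int_a^b (u'(x))^2x^p\,dx.$$
   Context: $C_p$ depends only on $p$, not on $a$, $b$ or $u$. *)

From HB Require Import structures.
From mathcomp Require Import all_boot all_order all_algebra.
From mathcomp Require Import all_classical all_reals all_analysis.
Set Implicit Arguments. Unset Strict Implicit. Unset Printing Implicit Defensive.
Import Order.TTheory GRing.Theory Num.Theory.
Local Open Scope ring_scope.
Local Open Scope classical_set_scope.

(* H^1(a,b) in one dimension: u is (a representative of) an H^1 function on
   [a,b] with weak derivative g iff g is in L^2(a,b) and
   u x = u a + \int_a^x g  for every x in [a,b]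
   (the absolutely continuous representative; g = u' a.e.). *)
Definition H1_with_deriv (R : realType) (a b : R) (u g : R -> R) : Prop :=
  measurable_fun `[a, b] g /\
  (@lebesgue_measure R).-integrable `[a, b] (fun x => (g x ^+ 2)%:E) /\
  (forall x, a <= x <= b ->
     u x = u a + Rintegral (@lebesgue_measure R) `[a, x] g).

From HB Require Import structures.
From mathcomp Require Import all_boot all_order all_algebra.
From mathcomp Require Import all_classical all_reals all_analysis.
From mathcomp Require Import ring lra measurable_realfun.
Import Order.TTheory GRing.Theory Num.Theory.
Local Open Scope ring_scope.
Local Open Scope classical_set_scope.

(* Write d = b - x, L = b - a and G s = g(s)^2 s^p.  Since u(b) = 0 and s^p is
   nondecreasing, x^(p/2) |u(x)| <= \int_x^b |g(s)| s^(p/2) ds, and the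
   Cauchy-Schwarz inequality with the weight w(s) = (b - s + d^2/L)^(1/2),
   whose inverse has integral at most 2 sqrt d over (x, b), gives
     (u(x)/d)^2 x^p <= \int_x^b k(x, s) G(s) ds,
   k(x, s) = 2 d^(-3/2) (b - s + d^2/L)^(1/2).
   By Tonelli the left-hand side of the theorem is at most
   \int_a^b G(s) (\int_a^s k(x, s) dx) ds, and the inner integral is at most 8
   because (b - s + d^2/L)^(1/2) <= (b - s)^(1/2) + d / L^(1/2).  The shift
   d^2/L keeps w^(-1) bounded on (x, b), so that its integral is a plain
   application of the fundamental theorem of calculus, while its contribution
   2 (L d)^(-1/2) to k stays integrable in x (a shift of order d would
   contribute d^(-1)). *)

Lemma AMGM_scaled {R : realFieldType} (c y : R) :
  0 < c -> 2 * y <= c * y ^+ 2 + c^-1.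
Proof.
move=> c0; have : 0 <= (c * y - 1) ^+ 2 / c by rewrite divr_ge0 ?sqr_ge0 ?ltW.
have -> : (c * y - 1) ^+ 2 / c = c * y ^+ 2 + c^-1 - 2 * y.
  by field; rewrite gt_eqF.
lra.
Qed.

Lemma sqr_le_mul_of_AMGM {R : realFieldType} (Y A B : R) :
  0 <= Y -> 0 <= A -> 0 < B ->
  (forall l, 0 < l -> 2 * Y <= l * A + B / l) -> Y ^+ 2 <= A * B.
Proof.
rewrite le_eqVlt => /predU1P[<- A0 B0 _|Y0 A0 B0 HY].
  by rewrite expr0n mulr_ge0// ltW.
move: A0; rewrite le_eqVlt => /predU1P[A0|A0].
  have := HY (B / Y) (divr_gt0 B0 Y0).
  rewrite -A0 mulr0 add0r invf_div mulrCA divff ?gt_eqF// mulr1; lra.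
have := HY (Y / A) (divr_gt0 Y0 A0).
rewrite invf_div mulfVK ?gt_eqF// => h.
have : B * (A / Y) * Y = A * B by field; rewrite gt_eqF.
rewrite expr2; nra.
Qed.

Lemma sqrtrD_le {R : rcfType} (u v : R) : 0 <= u -> 0 <= v ->
  Num.sqrt (u + v) <= Num.sqrt u + Num.sqrt v.
Proof.
move=> u0 v0; have su := sqrtr_ge0 u; have sv := sqrtr_ge0 v.
rewrite -(ger0_norm (addr_ge0 su sv)) -sqrtr_sqr ler_sqrt ?sqr_ge0//.
rewrite sqrrD !sqr_sqrtr//.
have : 0 <= Num.sqrt u * Num.sqrt v *+ 2 by rewrite mulrn_wge0 ?mulr_ge0.
lra.
Qed.

Section integral_subr_powR.
Context {R : realType}.
Notation mu := (@lebesgue_measure R).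

Lemma powRN32_sqrt (x : R) : 0 < x -> x `^ (- 3 / 2) = (x * Num.sqrt x)^-1.
Proof.
move=> x0; have -> : (- 3 / 2 : R) = - (1 + 2^-1) by field.
by rewrite powRN powRD ?powRr1 ?powR12_sqrt ?ltW// gt_eqF// implybT.
Qed.

Lemma is_derive_subr_powR (e r : R) {y : R} : y < e ->
  is_derive y 1 (fun y => (e - y) `^ r) (- (r * (e - y) `^ (r - 1))).
Proof.
move=> ye.
have hg : is_derive (e - y) 1 (@powR R ^~ r) (r * (e - y) `^ (r - 1)).
  by apply: is_derive1_powR; rewrite subr_gt0.
have hf : is_derive y 1 (fun y => e - y) (0 - 1) by apply: is_deriveB.
have := @is_derive1_comp R (@powR R ^~ r) (fun y => e - y) y _ _ hg hf.
by rewrite sub0r mulrN1.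
Qed.

Lemma integral_subr_powR (e q a b : R) : a < b -> b < e -> q + 1 != 0 ->
  (\int[mu]_(y in `[a, b]) ((e - y) `^ q)%:E =
   (((e - a) `^ (q + 1) - (e - b) `^ (q + 1)) / (q + 1))%:E)%E.
Proof.
move=> ab be q1.
pose F y := - (q + 1)^-1 * (e - y) `^ (q + 1).
have dF y : y < e -> is_derive y 1 F ((e - y) `^ q).
  move=> ye; have := is_deriveZ (- (q + 1)^-1) (is_derive_subr_powR e (q + 1) ye).
  by rewrite addrK scaleNr scalerN opprK -[_ *: _]/(_ * _) mulrA mulVf// mul1r.
have cF y : y < e -> {for y, continuous F}.
  by move=> /dF[+ _] => /derivable1_diffP/differentiable_continuous.
have -> : ((e - a) `^ (q + 1) - (e - b) `^ (q + 1)) / (q + 1) = F b - F a.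
  by rewrite /F; field.
apply: continuous_FTC2 => //.
- apply: derivable_within_continuous => y; rewrite in_itv/= => /andP[_ yb].
  by case: (is_derive_subr_powR e q (le_lt_trans yb be)).
- split.
  + by move=> y; rewrite in_itv/= => /andP[_ yb]; case: (dF y (lt_trans yb be)).
  + exact/cvg_at_right_filter/cF/(lt_trans ab be).
  + exact/cvg_at_left_filter/cF.
- move=> y; rewrite in_itv/= => /andP[_ yb].
  by rewrite derive1E; case: (dF y (lt_trans yb be)).
Qed.

Lemma integral_subr_powRN12 (e a b : R) : a < b -> b < e ->
  (\int[mu]_(y in `[a, b]) ((e - y) `^ (- 2^-1))%:E =
   (2 * (Num.sqrt (e - a) - Num.sqrt (e - b)))%:E)%E.
Proof.
move=> ab be; rewrite integral_subr_powR//; last by apply/eqP; lra.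
have ea : 0 <= e - a by rewrite subr_ge0 ltW// (lt_trans ab).
have eb : 0 <= e - b by rewrite subr_ge0 ltW.
have -> : (- 2^-1 + 1 : R) = 2^-1 by field.
by rewrite (powR12_sqrt ea) (powR12_sqrt eb); congr EFin; field.
Qed.

Lemma integral_subr_powRN32 (e a b : R) : a < b -> b < e ->
  (\int[mu]_(y in `[a, b]) ((e - y) `^ (- 3 / 2))%:E =
   (2 * ((Num.sqrt (e - b))^-1 - (Num.sqrt (e - a))^-1))%:E)%E.
Proof.
move=> ab be; rewrite integral_subr_powR//; last by apply/eqP; lra.
have ea : 0 <= e - a by rewrite subr_ge0 ltW// (lt_trans ab).
have eb : 0 <= e - b by rewrite subr_ge0 ltW.
have -> : (- 3 / 2 + 1 : R) = - 2^-1 by field.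
rewrite !powRN (powR12_sqrt ea) (powR12_sqrt eb).
by rewrite invrN invrK; congr EFin; ring.
Qed.

Lemma integral_itvoo_subr_powRN12_le (x b del : R) : x < b -> 0 < del ->
  (\int[mu]_(s in `]x, b[) ((b + del - s) `^ (- 2^-1))%:E <=
   (2 * Num.sqrt (b - x))%:E)%E.
Proof.
move=> xb del0.
have mpow : measurable_fun `[x, b] (fun s => (b + del - s) `^ (- 2^-1)).
  exact/measurable_funTS/(measurableT_comp (measurable_powR _))/measurable_funB.
apply: (@le_trans _ _ (\int[mu]_(s in `[x, b]) ((b + del - s) `^ (- 2^-1))%:E)%E).
  apply: ge0_subset_integral => //.
  - exact/measurable_EFinP.
  - by move=> s _; rewrite lee_fin powR_ge0.
  - by apply: subset_itv; rewrite bnd_simp.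
rewrite integral_subr_powRN12//; last by rewrite ltrDl.
have -> : b + del - x = (b - x) + del by ring.
rewrite (_ : b + del - b = del) ?lee_fin; last by ring.
have d0 : 0 < b - x by rewrite subr_gt0.
have := sqrtrD_le (b - x) del (ltW d0) (ltW del0); have := sqrtr_ge0 del; lra.
Qed.

End integral_subr_powR.

Section ge0_integral_inequalities.
Context d (T : measurableType d) (R : realType) (mu : {measure set T -> \bar R}).

Lemma ge0_le_integral_nonmeas (D : set T) (f1 f2 : T -> \bar R) :
  (forall x, D x -> 0 <= f1 x)%E -> (forall x, D x -> f1 x <= f2 x)%E ->
  (\int[mu]_(x in D) f1 x <= \int[mu]_(x in D) f2 x)%E.
Proof.
move=> f10 f12.
have f20 x : D x -> (0 <= f2 x)%E by move=> Dx; exact: le_trans (f10 x Dx) (f12 x Dx).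
rewrite (ge0_integralE _ f10) (ge0_integralE _ f20).
apply: ereal_sup_le => _ [h hf <-]; exists h => //= x.
apply: le_trans (hf x) _; rewrite /patch; case: ifP => // /set_mem; exact: f12.
Qed.

Variables (D : set T) (f w : T -> R).
Hypotheses (mD : measurable D) (mf : measurable_fun D f).
Hypotheses (mw : measurable_fun D w) (mwV : measurable_fun D (fun x => (w x)^-1)).
Hypothesis w_gt0 : forall x, D x -> 0 < w x.

Let fw_ge0 x : D x -> 0 <= f x ^+ 2 * w x.
Proof. by move=> Dx; rewrite mulr_ge0 ?sqr_ge0 ?ltW ?w_gt0. Qed.

Let wV_ge0 x : D x -> 0 <= (w x)^-1.
Proof. by move=> Dx; rewrite invr_ge0 ltW ?w_gt0. Qed.

Lemma integral_abs_le_AMGM (l : R) : 0 < l ->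
  (2%:E * \int[mu]_(x in D) `|f x|%:E <=
   l%:E * \int[mu]_(x in D) (f x ^+ 2 * w x)%:E +
   l^-1%:E * \int[mu]_(x in D) ((w x)^-1)%:E)%E.
Proof.
move=> l0; have l0' := ltW l0; have lV0 : 0 <= l^-1 by rewrite invr_ge0.
have mfw : measurable_fun D (fun x => f x ^+ 2 * w x).
  by apply: measurable_funM => //; exact: measurable_funX.
have mfwE : measurable_fun D (fun x => (f x ^+ 2 * w x)%:E) by exact/measurable_EFinP.
have mwVE : measurable_fun D (fun x => ((w x)^-1)%:E) by exact/measurable_EFinP.
have fwE0 x : D x -> (0 <= (f x ^+ 2 * w x)%:E)%E by move=> Dx; rewrite lee_fin fw_ge0.
have wVE0 x : D x -> (0 <= ((w x)^-1)%:E)%E by move=> Dx; rewrite lee_fin wV_ge0.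
rewrite -ge0_integralZl_EFin//; last exact/measurable_EFinP/measurableT_comp.
rewrite -!ge0_integralZl_EFin// -ge0_integralD//; first last.
- by apply/measurable_EFinP/measurable_funM.
- by move=> x Dx; rewrite lee_fin mulr_ge0 ?wV_ge0.
- by apply/measurable_EFinP/measurable_funM.
- by move=> x Dx; rewrite lee_fin mulr_ge0 ?fw_ge0.
apply: ge0_le_integral_nonmeas => x Dx; first by rewrite lee_fin mulr_ge0.
rewrite -!EFinM -EFinD lee_fin.
apply: le_trans (AMGM_scaled (l * w x) `|f x| (mulr_gt0 l0 (w_gt0 x Dx))) _.
by rewrite real_normK ?num_real// invfM le_eqVlt; apply/orP; left; apply/eqP; ring.
Qed.

Lemma cauchy_schwarz_weighted (Y B : R) : 0 <= Y -> 0 < B ->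
  (Y%:E <= \int[mu]_(x in D) `|f x|%:E)%E ->
  (\int[mu]_(x in D) ((w x)^-1)%:E <= B%:E)%E ->
  ((Y ^+ 2)%:E <= \int[mu]_(x in D) (f x ^+ 2 * w x)%:E * B%:E)%E.
Proof.
move=> Y0 B0 Yf wB.
have AMGM l : 0 < l -> ((2 * Y)%:E <=
    l%:E * \int[mu]_(x in D) (f x ^+ 2 * w x)%:E + (B / l)%:E)%E.
  move=> l0; apply: (@le_trans _ _ (2%:E * \int[mu]_(x in D) `|f x|%:E)%E).
    by rewrite EFinM lee_pmul2l.
  apply: le_trans (integral_abs_le_AMGM l l0) _.
  by rewrite leeD2l// mulrC EFinM lee_pmul2l ?lte_fin ?invr_gt0.
have : (0 <= \int[mu]_(x in D) (f x ^+ 2 * w x)%:E)%E.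
  by apply: integral_ge0 => x Dx; rewrite lee_fin fw_ge0.
move: AMGM; case: (\int[mu]_(x in D) _)%E => [A AMGM A0|_ _|_]; last by rewrite leeNy_eq.
- by rewrite -EFinM lee_fin; apply: sqr_le_mul_of_AMGM => // l l0; exact: AMGM.
- by rewrite gt0_mulye ?lte_fin//; exact: leey.
Qed.

End ge0_integral_inequalities.

Section triangle_kernel.
Context {R : realType}.
Notation mu := (@lebesgue_measure R).
Variables (a b C : R) (k : R -> R -> R) (G : R -> R).
Hypothesis mk : measurable_fun [set: measurableTypeR R * measurableTypeR R]
  (fun z => k z.1 z.2).
Hypotheses (k_ge0 : forall x s, 0 <= k x s) (C_ge0 : 0 <= C).
Hypotheses (mG : measurable_fun `[a, b] G) (G_ge0 : forall s, 0 <= G s).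
Hypothesis k_le : forall s, a < s < b ->
  (\int[mu]_(x in `[a, s]) (k x s)%:E <= C%:E)%E.

Let Gab := patch (fun=> 0) `[a, b] G.

Let Gab_ge0 s : 0 <= Gab s. Proof. by rewrite /Gab patchE; case: ifP. Qed.

Let in_triangle (z : measurableTypeR R * measurableTypeR R) :=
  (a <= z.1) && (z.1 < z.2) && (z.2 < b).

Let F z := (if in_triangle z then k z.1 z.2 * Gab z.2 else 0)%:E.

Let F_ge0 z : (0 <= F z)%E.
Proof. by rewrite /F lee_fin; case: ifP => // _; rewrite mulr_ge0. Qed.

Let measurable_F : measurable_fun setT F.
Proof.
apply/measurable_EFinP; apply: measurable_fun_ifT.
- apply: measurable_and; first apply: measurable_and.
  + exact: measurable_fun_ler.
  + exact: measurable_fun_ltr.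
  + exact: measurable_fun_ltr.
- apply: measurable_funM => //; apply: measurableT_comp measurable_snd.
  exact/(measurable_restrictT _ _).1.
- exact: measurable_cst.
Qed.

Let integral_itvoo_le_F x : `[a, b] x ->
  (\int[mu]_(s in `]x, b[) (k x s * G s)%:E <= \int[mu]_s F (x, s))%E.
Proof.
rewrite /= in_itv/= => /andP[ax _].
rewrite [leLHS]integral_mkcond; apply: ge0_le_integral_nonmeas => s _.
  by apply: erestrict_ge0 => y _; rewrite lee_fin mulr_ge0.
rewrite patchE; case: ifPn => [/set_mem/=|_]; last exact: F_ge0.
rewrite in_itv/= => /andP[xs sb].
rewrite /F /in_triangle/= ax xs sb /Gab patchE mem_set//=.
by rewrite in_itv/= (ltW (le_lt_trans ax xs)) ltW.
Qed.

Let integral_F_le s :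
  (\int[mu]_x F (x, s) <= ((fun s => (C * G s)%:E) \_ `[a, b]) s)%E.
Proof.
have [/andP[sa sb]|nsab] := boolP (a < s < b); last first.
  rewrite (eq_integral (fun=> 0%E)) ?integral0; last first.
    move=> x _; rewrite /F /in_triangle/=; case: ifPn => // /andP[/andP[ax xs] sb].
    by rewrite (le_lt_trans ax xs) sb in nsab.
  by apply: erestrict_ge0 => y _; rewrite lee_fin mulr_ge0.
have sab : `[a, b] s by rewrite /= in_itv/= !ltW.
apply: (@le_trans _ _ (\int[mu]_(x in `[a, s]) (k x s * G s)%:E)%E).
  rewrite [leRHS]integral_mkcond; apply: ge0_le_integral_nonmeas => x _ //.
  rewrite /F /in_triangle/=; case: ifPn => [/andP[/andP[ax xs] _]|_]; last first.
    by apply: erestrict_ge0 => y _; rewrite lee_fin mulr_ge0.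
  rewrite patchE mem_set/=; last by rewrite in_itv/= ax ltW.
  by rewrite /Gab patchE mem_set.
have mks : measurable_fun `[a, s] (fun x => (k x s)%:E).
  apply/measurable_EFinP/measurable_funTS.
  exact: measurableT_comp mk (pair2_measurable s).
have ks0 x : `[a, s] x -> (0 <= (k x s)%:E)%E by move=> _; rewrite lee_fin.
under eq_integral do rewrite EFinM.
rewrite ge0_integralZr ?lee_fin// /patch mem_set// EFinM.
by apply: lee_wpmul2r; rewrite ?lee_fin// k_le ?sa.
Qed.

Lemma integral_triangle_kernel_le :
  (\int[mu]_(x in `[a, b]) \int[mu]_(s in `]x, b[) (k x s * G s)%:E <=
   C%:E * \int[mu]_(s in `[a, b]) (G s)%:E)%E.
Proof.
apply: (@le_trans _ _ (\int[mu]_x \int[mu]_s F (x, s))%E).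
  rewrite [leLHS]integral_mkcond; apply: ge0_le_integral_nonmeas => x _.
    by apply: erestrict_ge0 => y _; apply: integral_ge0 => s _; rewrite lee_fin mulr_ge0.
  rewrite patchE; case: ifPn => [/set_mem/integral_itvoo_le_F//|_].
  exact: integral_ge0.
rewrite (fubini_tonelli F measurable_F F_ge0).
apply: (@le_trans _ _ (\int[mu]_s ((fun s => (C * G s)%:E) \_ `[a, b]) s)%E).
  by apply: ge0_le_integral_nonmeas => s _; [exact: integral_ge0|exact: integral_F_le].
rewrite -integral_mkcond; under eq_integral do rewrite EFinM.
rewrite ge0_integralZl_EFin//; last exact/measurable_EFinP.
by move=> x _; rewrite lee_fin.
Qed.

End triangle_kernel.

Section hardy_kernel.
Context {R : realType}.
Notation mu := (@lebesgue_measure R).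

Definition hardy_kernel (a b x s : R) :=
  2 * (b - x) `^ (- 3 / 2) * (b - s + (b - x) ^+ 2 / (b - a)) `^ 2^-1.

Lemma hardy_kernel_ge0 (a b x s : R) : 0 <= hardy_kernel a b x s.
Proof. by rewrite !mulr_ge0 ?powR_ge0. Qed.

Lemma measurable_hardy_kernel (a b : R) :
  measurable_fun [set: measurableTypeR R * measurableTypeR R]
    (fun z => hardy_kernel a b z.1 z.2).
Proof.
apply: measurable_funM; first apply: measurable_funM => //.
  exact: measurableT_comp (measurable_powR _) (measurable_funB _ measurable_fst).
apply: measurableT_comp (measurable_powR _) _.
apply: measurable_funD; first exact: measurable_funB.
apply: measurable_funM => //; apply: measurable_funX; exact: measurable_funB.
Qed.

Lemma hardy_kernel_le (a b x s : R) : a < b -> x < b -> s <= b ->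
  hardy_kernel a b x s <=
  2 * Num.sqrt (b - s) * (b - x) `^ (- 3 / 2) +
  2 / Num.sqrt (b - a) * (b - x) `^ (- 2^-1).
Proof.
move=> ab xb sb; set L := b - a; set t := b - s; set d := b - x.
have L0 : 0 < L by rewrite subr_gt0.
have t0 : 0 <= t by rewrite subr_ge0.
have d0 : 0 < d by rewrite subr_gt0.
have dL0 : 0 <= d ^+ 2 / L by rewrite divr_ge0 ?sqr_ge0 ?ltW.
rewrite /hardy_kernel -/L -/t -/d powRN32_sqrt// powRN.
rewrite (powR12_sqrt (ltW d0)) (powR12_sqrt (addr_ge0 t0 dL0)).
apply: le_trans.
  apply: ler_wpM2l; last exact: sqrtrD_le _ _ t0 dL0.
  by rewrite mulr_ge0// invr_ge0 mulr_ge0 ?sqrtr_ge0 ?ltW.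
rewrite sqrtrM ?sqr_ge0// sqrtr_sqr (ger0_norm (ltW d0)) (sqrtrV (ltW L0)).
have sd0 : 0 < Num.sqrt d by rewrite sqrtr_gt0.
have sL0 : 0 < Num.sqrt L by rewrite sqrtr_gt0.
by rewrite le_eqVlt; apply/orP; left; apply/eqP; field; rewrite !gt_eqF.
Qed.

Lemma hardy_kernel_integral_le (a b s : R) : a < s < b ->
  (\int[mu]_(x in `[a, s]) (hardy_kernel a b x s)%:E <= 8%:E)%E.
Proof.
move=> /andP[a_s sb]; have ab := lt_trans a_s sb.
set L := b - a; set t := b - s.
have sL0 : 0 < Num.sqrt L by rewrite sqrtr_gt0 subr_gt0.
have st0 : 0 < Num.sqrt t by rewrite sqrtr_gt0 subr_gt0.
have mpow r : measurable_fun `[a, s] (fun x => ((b - x) `^ r)%:E).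
  apply/measurable_EFinP/measurable_funTS.
  exact/(measurableT_comp (measurable_powR _))/measurable_funB.
have pow0 r : forall x, `[a, s] x -> (0 <= ((b - x) `^ r)%:E)%E.
  by move=> x _; rewrite lee_fin powR_ge0.
apply: (@le_trans _ _ (\int[mu]_(x in `[a, s])
    ((2 * Num.sqrt t)%:E * ((b - x) `^ (- 3 / 2))%:E +
     (2 / Num.sqrt L)%:E * ((b - x) `^ (- 2^-1))%:E))%E).
  apply: ge0_le_integral_nonmeas => x; rewrite /= in_itv/= => /andP[_ xs].
    by rewrite lee_fin hardy_kernel_ge0.
  rewrite -!EFinM -EFinD lee_fin; apply: hardy_kernel_le => //.
    exact: le_lt_trans xs sb.
  exact: ltW.
rewrite ge0_integralD//; first last.
- by apply: emeasurable_funM; [exact: measurable_cst|exact: mpow].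
- by move=> x _; rewrite mule_ge0 ?lee_fin ?divr_ge0 ?sqrtr_ge0 ?powR_ge0.
- by apply: emeasurable_funM; [exact: measurable_cst|exact: mpow].
- by move=> x _; rewrite mule_ge0 ?lee_fin ?mulr_ge0 ?sqrtr_ge0 ?powR_ge0.
have c1 : 0 <= 2 * Num.sqrt t by rewrite mulr_ge0 ?sqrtr_ge0.
have c2 : 0 <= 2 / Num.sqrt L by rewrite divr_ge0 ?sqrtr_ge0.
rewrite ge0_integralZl_EFin//; [|exact: pow0|exact: mpow].
rewrite ge0_integralZl_EFin//; [|exact: pow0|exact: mpow].
rewrite integral_subr_powRN32// integral_subr_powRN12// -/L -/t.
rewrite -!EFinM -EFinD lee_fin.
have -> : 2 * Num.sqrt t * (2 * ((Num.sqrt t)^-1 - (Num.sqrt L)^-1)) +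
    2 / Num.sqrt L * (2 * (Num.sqrt L - Num.sqrt t)) =
    8 - 8 * (Num.sqrt t / Num.sqrt L) by field; rewrite !gt_eqF.
by rewrite gerBl mulr_ge0// divr_ge0 ?sqrtr_ge0.
Qed.

End hardy_kernel.

Section H1_hardy_pointwise.
Context {R : realType}.
Notation mu := (@lebesgue_measure R).
Variables (p a b : R) (u g : R -> R).
Hypotheses (p_ge0 : 0 <= p) (a_ge0 : 0 <= a).
Hypotheses (hu : H1_with_deriv a b u g) (ub : u b = 0).

Let measurable_deriv_itvoo x : a <= x -> measurable_fun `]x, b[ g.
Proof.
by move=> ax; apply: measurable_funS hu.1 => //; apply: subset_itv; rewrite bnd_simp.
Qed.

Lemma H1_deriv_integrable : mu.-integrable `[a, b] (EFin \o g).
Proof.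
have [mg [ig2 _]] := hu.
apply: (@le_integrable _ _ _ mu _ (measurable_itv _) _ (fun x => (1 + g x ^+ 2)%:E)).
- exact/measurable_EFinP.
- move=> x _; rewrite /= lee_fin (ger0_norm (addr_ge0 ler01 (sqr_ge0 _))).
  have := AMGM_scaled 1 `|g x| ltr01; rewrite invr1 mul1r real_normK ?num_real//.
  have := normr_ge0 (g x); lra.
- rewrite (_ : (fun x => _) = (EFin \o cst 1) \+ (fun x => (g x ^+ 2)%:E)); last first.
    by apply/funext => x /=; rewrite EFinD.
  apply: integrableD => //; apply: measurable_bounded_integrable => //.
  + have := @lebesgue_measure_itv R `[a, b]%R; rewrite /= => ->.
    by case: ifP => // _; rewrite -EFinB ltry.
  + exact: bounded_cst.
Qed.

Lemma H1_abs_le_integral x : a <= x <= b ->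
  (`|u x|%:E <= \int[mu]_(t in `]x, b[) `|g t|%:E)%E.
Proof.
move=> /andP[ax xb]; have [_ [_ uE]] := hu; have ig := H1_deriv_integrable.
have igxb : mu.-integrable `]x, b] (EFin \o g).
  by apply: integrableS ig => //; apply: subset_itv; rewrite bnd_simp.
have -> : u x = - \int[mu]_(t in `]x, b]) g t.
  rewrite -(@Rintegral_itvB _ g (BLeft a) (BRight b) x ig) ?bnd_simp//.
  have := uE x; have := uE b; rewrite ax xb lexx ub (le_trans ax xb).
  move=> /(_ isT) ub0 /(_ isT); lra.
rewrite normrN; apply: (@le_trans _ _ (\int[mu]_(t in `]x, b]) `|g t|)%:E).
  by rewrite lee_fin le_normr_Rintegral.
rewrite fineK; last exact/integrable_fin_num/(integrable_norm igxb).
rewrite (@integral_itv_bndoo _ x b _ false false)//.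
by apply/measurable_EFinP/measurableT_comp => //; exact: measurable_deriv_itvoo.
Qed.

Lemma H1_weighted_abs_le_integral x : a <= x <= b ->
  ((Num.sqrt (x `^ p) * `|u x|)%:E <=
   \int[mu]_(s in `]x, b[) `|g s * Num.sqrt (s `^ p)|%:E)%E.
Proof.
move=> xab; have /andP[ax _] := xab; have x0 : 0 <= x := le_trans a_ge0 ax.
apply: (@le_trans _ _ ((Num.sqrt (x `^ p))%:E * \int[mu]_(s in `]x, b[) `|g s|%:E)%E).
  by rewrite EFinM lee_wpmul2l ?lee_fin ?sqrtr_ge0// H1_abs_le_integral.
rewrite -ge0_integralZl_EFin ?sqrtr_ge0//; last first.
  by apply/measurable_EFinP/measurableT_comp => //; exact: measurable_deriv_itvoo.
apply: ge0_le_integral_nonmeas => s; rewrite /= in_itv/= => /andP[xs _].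
  by rewrite lee_fin mulr_ge0 ?sqrtr_ge0.
rewrite lee_fin normrM (ger0_norm (sqrtr_ge0 _)) mulrC; apply: ler_wpM2l => //.
apply/ler_wsqrtr/ge0_ler_powR; rewrite ?nnegrE//; last exact: ltW.
exact: le_trans x0 (ltW xs).
Qed.

Lemma H1_weighted_sqr_le x : a <= x < b ->
  ((x `^ p * u x ^+ 2)%:E <= (2 * Num.sqrt (b - x))%:E *
   \int[mu]_(s in `]x, b[)
     (g s ^+ 2 * s `^ p * (b - s + (b - x) ^+ 2 / (b - a)) `^ 2^-1)%:E)%E.
Proof.
move=> /andP[ax xb]; set del := (b - x) ^+ 2 / (b - a).
have del0 : 0 < del by rewrite divr_gt0 ?exprn_gt0 ?subr_gt0// (le_lt_trans ax xb).
pose w s := (b + del - s) `^ 2^-1.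
have mpow r : measurable_fun `]x, b[ (fun s => (b + del - s) `^ r).
  exact/measurable_funTS/(measurableT_comp (measurable_powR _))/measurable_funB.
rewrite -[x `^ p * _](_ : (Num.sqrt (x `^ p) * `|u x|) ^+ 2 = _); last first.
  by rewrite exprMn sqr_sqrtr ?powR_ge0// real_normK ?num_real.
have -> : (\int[mu]_(s in `]x, b[) (g s ^+ 2 * s `^ p * (b - s + del) `^ 2^-1)%:E =
    \int[mu]_(s in `]x, b[) ((g s * Num.sqrt (s `^ p)) ^+ 2 * w s)%:E)%E.
  by apply: eq_integral => s _; rewrite exprMn sqr_sqrtr ?powR_ge0// /w addrAC.
rewrite muleC; apply: cauchy_schwarz_weighted => //.
- apply: measurable_funM; first exact: measurable_deriv_itvoo.
  apply: measurable_funTS; apply: measurableT_comp (measurable_powR p).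
  exact: continuous_measurable_fun (@sqrt_continuous R).
- exact: mpow.
- rewrite (_ : (fun s => (w s)^-1) = fun s => (b + del - s) `^ (- 2^-1)).
    exact: mpow.
  by apply/funext => s; rewrite powRN.
- move=> s; rewrite /= in_itv/= => /andP[_ sb].
  by rewrite powR_gt0// subr_gt0 (lt_le_trans sb)// lerDl ltW.
- by rewrite mulr_gt0// sqrtr_gt0 subr_gt0.
- by rewrite H1_weighted_abs_le_integral// ax ltW.
- under eq_integral do rewrite -powRN.
  exact: integral_itvoo_subr_powRN12_le.
Qed.

Lemma H1_hardy_pointwise x : a <= x <= b ->
  (((u x / (b - x)) ^+ 2 * x `^ p)%:E <=
   \int[mu]_(s in `]x, b[) (hardy_kernel a b x s * (g s ^+ 2 * s `^ p))%:E)%E.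
Proof.
move=> /andP[ax]; rewrite le_eqVlt => /predU1P[->|xb].
  (* at x = b the left-hand side is 0, as u b / 0 = 0 *)
  rewrite subrr invr0 mulr0 expr0n mul0r; apply: integral_ge0 => s _.
  by rewrite lee_fin mulr_ge0 ?hardy_kernel_ge0// mulr_ge0 ?sqr_ge0 ?powR_ge0.
set d := b - x; have d0 : 0 < d by rewrite subr_gt0.
have -> : (\int[mu]_(s in `]x, b[) (hardy_kernel a b x s * (g s ^+ 2 * s `^ p))%:E =
    (2 * d `^ (- 3 / 2))%:E * \int[mu]_(s in `]x, b[)
      (g s ^+ 2 * s `^ p * (b - s + d ^+ 2 / (b - a)) `^ 2^-1)%:E)%E.
  rewrite -ge0_integralZl_EFin ?mulr_ge0 ?powR_ge0//; last 2 first.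
  - move=> s _; rewrite lee_fin.
    exact: mulr_ge0 (mulr_ge0 (sqr_ge0 _) (powR_ge0 _ _)) (powR_ge0 _ _).
  - apply/measurable_EFinP/measurable_funM; last first.
      apply/measurable_funTS/(measurableT_comp (measurable_powR _)).
      by apply: measurable_funD => //; exact: measurable_funB.
    apply: measurable_funM; last exact: measurable_funTS (measurable_powR _).
    by apply: measurable_funX; exact: measurable_deriv_itvoo.
  by apply: eq_integral => s _; rewrite -EFinM /hardy_kernel -/d; congr EFin; ring.
have -> : ((u x / d) ^+ 2 * x `^ p)%:E =
    (((d ^+ 2)^-1)%:E * (x `^ p * u x ^+ 2)%:E)%E.
  by rewrite -EFinM; congr EFin; field; rewrite gt_eqF.
have -> : (2 * d `^ (- 3 / 2))%:E = (((d ^+ 2)^-1)%:E * (2 * Num.sqrt d)%:E)%E.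
  rewrite powRN32_sqrt// -EFinM; congr EFin; set r := Num.sqrt d.
  have r0 : 0 < r by rewrite sqrtr_gt0.
  by rewrite -(sqr_sqrtr (ltW d0)) -/r; field; rewrite gt_eqF.
rewrite -muleA; apply: lee_wpmul2l; first by rewrite lee_fin invr_ge0 sqr_ge0.
by apply: H1_weighted_sqr_le; rewrite ax.
Qed.

End H1_hardy_pointwise.

Theorem lemma4p1 (R : realType) (p : R) (hp : 0 <= p) :
  exists C : R, forall (a b : R) (u g : R -> R),
    0 <= a -> a < b -> H1_with_deriv a b u g -> u b = 0 ->
    (\int[@lebesgue_measure R]_(x in `[a, b]) (((u x / (b - x)) ^+ 2) * x `^ p)%:E
     <= C%:E * \int[@lebesgue_measure R]_(x in `[a, b]) ((g x ^+ 2) * x `^ p)%:E)%E.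
Proof.
exists 8 => a b u g a0 _ hu ub.
apply: (@le_trans _ _ (\int[lebesgue_measure]_(x in `[a, b])
    \int[lebesgue_measure]_(s in `]x, b[)
      (hardy_kernel a b x s * (g s ^+ 2 * s `^ p))%:E)%E).
  apply: ge0_le_integral_nonmeas => x; rewrite /= in_itv/= => xab.
    by rewrite lee_fin mulr_ge0 ?sqr_ge0 ?powR_ge0.
  exact: H1_hardy_pointwise.
apply: integral_triangle_kernel_le => //.
- exact: measurable_hardy_kernel.
- exact: hardy_kernel_ge0.
- apply: measurable_funM; first exact: measurable_funX hu.1.
  exact: measurable_funTS (measurable_powR _).
- by move=> s; rewrite mulr_ge0 ?sqr_ge0 ?powR_ge0.
- exact: hardy_kernel_integral_le.
Qed.
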